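(* Let $R$ be an arithmetic ring which is self fp-injective. Then $\lambda\text{-}\dim(R)\le 2$.
   Context: All rings are commutative with identity. $R$ is arithmetic if $R_M$ is a valuation ring (ideals totally ordered by inclusion) for every maximal ideal $M$. An $R$-module $E$ is fp-injective if $\mathrm{Ext}^1_R(F,E)=0$ for every finitely presented $R$-module $F$; $R$ is self fp-injective if $R$ is fp-injective as an $R$-module. For an $R$-module $E$, $\lambda_R(E)$ is the supremum of the $n$ for which there is an exact sequence $F_n\to\cdots\to F_0\to E\to0$ with $F_i$ free of finite rank ($-1$ if $E$ is not finitely generated); $\lambda\text{-}\dim(R)$ is the least $n$ (or $\infty$) such that $\lambda_R(E)\ge n$ implies $\lambda_R(E)=\infty$ for all $E$. *)

From HB Require Import structures.
From mathcomp Require Import all_boot all_order all_algebra.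
Set Implicit Arguments. Unset Strict Implicit. Unset Printing Implicit Defensive.
Import GRing.Theory.
Local Open Scope ring_scope.

(* Free modules of finite rank: row spaces ['rV[R]_k]; R-linear maps between
   them are matrices acting on the right ([v *m A]). *)

Section Defs.
Variable R : comPzRingType.

Definition is_ideal (I : R -> Prop) : Prop :=
  I 0 /\ (forall x y, I x -> I y -> I (x + y)) /\ (forall r x, I x -> I (r * x)).

Definition is_maximal_ideal (M : R -> Prop) : Prop :=
  is_ideal M /\ ~ M 1 /\
  forall J : R -> Prop, is_ideal J -> (forall x, M x -> J x) ->
    (forall x, J x <-> M x) \/ J 1.

(* R_M is a valuation ring: for any two elements of R_M one divides the other.
   Elements of R_M are fractions a/s (s notin M) and s is a unit, so it suffices
   to compare images a/1, b/1; "b/1 = (c/t)(a/1) in R_M" unfolds to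
   "u (t b - c a) = 0 for some u notin M", i.e. s b = c' a with s notin M. *)
Definition localization_is_valuation (M : R -> Prop) : Prop :=
  forall a b : R,
    (exists s c, ~ M s /\ s * b = c * a) \/ (exists s c, ~ M s /\ s * a = c * b).

Definition arithmetic : Prop :=
  forall M, is_maximal_ideal M -> localization_is_valuation M.

(* There is an exact sequence F_n -> ... -> F_1 -> F_0 -> E -> 0 with F_i free
   of finite rank: F_i = 'rV_(k i), d_(i+1) : F_(i+1) -> F_i is (v |-> v *m A i),
   and p : F_0 -> E. *)
Definition has_free_presentation_of_length (E : lmodType R) (n : nat) : Prop :=
  exists (k : nat -> nat) (A : forall i, 'M[R]_(k i.+1, k i))
         (p : {linear 'rV[R]_(k 0) -> E}),
    (forall e : E, exists v, p v = e) /\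
    ((0 < n)%N -> forall v : 'rV[R]_(k 0), p v = 0 <-> exists w, v = w *m A 0%N) /\
    (forall i : nat, (i.+2 <= n)%N ->
       forall v : 'rV[R]_(k i.+1), v *m A i = 0 <-> exists w, v = w *m A i.+1).

Definition lambda_ge (E : lmodType R) (n : nat) : Prop :=
  has_free_presentation_of_length E n.

Definition lambda_infty (E : lmodType R) : Prop := forall n, lambda_ge E n.

Definition finitely_presented (F : lmodType R) : Prop := lambda_ge F 1.

(* Ext^1_R(F,E) = 0, via Yoneda: every extension 0 -> E -> X -> F -> 0 splits. *)
Definition Ext1_vanishes (F E : lmodType R) : Prop :=
  forall (X : lmodType R) (i : {linear E -> X}) (q : {linear X -> F}),
    injective i -> (forall f, exists x, q x = f) ->
    (forall x, q x = 0 <-> exists e, x = i e) ->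
    exists s : {linear F -> X}, forall f, q (s f) = f.

Definition fp_injective (E : lmodType R) : Prop :=
  forall F : lmodType R, finitely_presented F -> Ext1_vanishes F E.

Definition self_fp_injective : Prop := fp_injective R^o.

(* lambda-dim(R) <= m : for every n <= m... equivalently (monotonicity)
   lambda_R(E) >= m implies lambda_R(E) = infinity for all E. *)
Definition lambda_dim_le (m : nat) : Prop :=
  forall E : lmodType R, lambda_ge E m -> lambda_infty E.

End Defs.

(* It suffices to show that if ker A0 = im A1 (for maps v |-> v *m A between
   free modules of finite rank), then ker A1 is finitely generated: iterating
   this prolongs a presentation F_2 -> F_1 -> F_0 -> E -> 0 indefinitely.
   If A1 *m y = 0, then u *m y = 0 for every u with u *m A0 = 0, and self
   fp-injectivity makes A0 *m c = y solvable (it splits the pushout of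
   R <- R^k1 -> R^k0 along y and A0): the right kernel of A1 is spanned by the
   columns of A0.  Over an arithmetic ring a finitely generated right kernel
   forces a finitely generated left kernel.  Indeed the x for which x * ker A1
   lies in a finitely generated submodule of ker A1 form an ideal, and no
   maximal ideal M contains it: over the valuation ring R_M, elementary row and
   column operations diagonalise A1, and both kernels are read off the
   diagonal. *)

From HB Require Import structures.
From mathcomp Require Import all_boot all_order all_algebra.
From mathcomp Require Import perm.
From mathcomp Require Import boolp classical_sets.
Set Implicit Arguments. Unset Strict Implicit. Unset Printing Implicit Defensive.
Import GRing.Theory.
Local Open Scope ring_scope.
Local Open Scope classical_set_scope.

Definition rowspan (R : comPzRingType) m n (N : 'M[R]_(m, n)) (x : 'rV[R]_n) :=
  exists z : 'rV_m, x = z *m N.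

Section Cokernel.
Variables (R : comPzRingType) (m n : nat) (N : 'M[R]_(m, n)).

Lemma rowspan0 : rowspan N 0.
Proof. by exists 0; rewrite mul0mx. Qed.

Lemma rowspanD x y : rowspan N x -> rowspan N y -> rowspan N (x + y).
Proof. by move=> [a ->] [b ->]; exists (a + b); rewrite mulmxDl. Qed.

Lemma rowspanZ r x : rowspan N x -> rowspan N (r *: x).
Proof. by move=> [a ->]; exists (r *: a); rewrite scalemxAl. Qed.

Lemma rowspanN x : rowspan N x -> rowspan N (- x).
Proof. by rewrite -scaleN1r; apply: rowspanZ. Qed.

Lemma rowspanB x y : rowspan N x -> rowspan N y -> rowspan N (x - y).
Proof. by move=> hx /rowspanN; apply: rowspanD. Qed.

(* The cokernel is built as the set of canonical representatives of the
   cosets of the row space, chosen by [xchoose]. *)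
Lemma coset_repr_ex x : exists y, `[< rowspan N (x - y) >].
Proof. by exists x; apply/asboolP; rewrite subrr; apply: rowspan0. Qed.

Definition coset_repr x := xchoose (coset_repr_ex x).

Lemma coset_reprP x : rowspan N (x - coset_repr x).
Proof. exact/asboolP/(xchooseP (coset_repr_ex x)). Qed.

Lemma coset_repr_eq x y : rowspan N (x - y) -> coset_repr x = coset_repr y.
Proof.
move=> hxy; apply: eq_xchoose => z; apply/asboolP/asboolP => hz.
  by rewrite -(subrKA x); apply: rowspanD => //; rewrite -opprB; apply: rowspanN.
by rewrite -(subrKA y); apply: rowspanD.
Qed.

Lemma coset_repr_id x : coset_repr (coset_repr x) = coset_repr x.
Proof. by apply: coset_repr_eq; rewrite -opprB; apply/rowspanN/coset_reprP. Qed.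

Definition coker := {x : 'rV[R]_n | coset_repr x == x}.
HB.instance Definition _ := Choice.copy coker {x : 'rV[R]_n | coset_repr x == x}.

Definition coker_pi x : coker := exist _ (coset_repr x) (introT eqP (coset_repr_id x)).

Lemma coker_piP x y : coker_pi x = coker_pi y <-> rowspan N (x - y).
Proof.
split=> [/(congr1 val) /= exy|/coset_repr_eq exy]; last exact: val_inj.
have := rowspanB (coset_reprP x) (coset_reprP y).
by rewrite exy opprB addrA subrK.
Qed.

Lemma coker_pi_val (u : coker) : coker_pi (val u) = u.
Proof. by apply: val_inj; case: u => x /= /eqP. Qed.

Lemma coker_pi_surj (u : coker) : exists x, coker_pi x = u.
Proof. by exists (val u); apply: coker_pi_val. Qed.

Lemma rowspan_val_pi x : rowspan N (val (coker_pi x) - x).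
Proof. by rewrite -opprB; apply/rowspanN/coset_reprP. Qed.

Definition coker_add (u v : coker) := coker_pi (val u + val v).
Definition coker_opp (u : coker) := coker_pi (- val u).
Definition coker_scale (r : R) (u : coker) := coker_pi (r *: val u).

Lemma coker_addE x y : coker_add (coker_pi x) (coker_pi y) = coker_pi (x + y).
Proof.
by apply/coker_piP; rewrite opprD addrACA; apply: rowspanD; apply: rowspan_val_pi.
Qed.

Lemma coker_oppE x : coker_opp (coker_pi x) = coker_pi (- x).
Proof. by apply/coker_piP; rewrite -opprD; apply/rowspanN/rowspan_val_pi. Qed.

Lemma coker_scaleE r x : coker_scale r (coker_pi x) = coker_pi (r *: x).
Proof. by apply/coker_piP; rewrite -scalerBr; apply/rowspanZ/rowspan_val_pi. Qed.

Lemma coker_addA : associative coker_add.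
Proof.
move=> u v w; rewrite -(coker_pi_val u) -(coker_pi_val v) -(coker_pi_val w).
by rewrite !coker_addE addrA.
Qed.

Lemma coker_addC : commutative coker_add.
Proof. by move=> u v; rewrite /coker_add addrC. Qed.

Lemma coker_add0 : left_id (coker_pi 0) coker_add.
Proof. by move=> u; rewrite -(coker_pi_val u) coker_addE add0r. Qed.

Lemma coker_addN : left_inverse (coker_pi 0) coker_opp coker_add.
Proof. by move=> u; rewrite -(coker_pi_val u) coker_oppE coker_addE addNr. Qed.

HB.instance Definition _ :=
  GRing.isZmodule.Build coker coker_addA coker_addC coker_add0 coker_addN.

Lemma coker_scaleA r s u : coker_scale r (coker_scale s u) = coker_scale (r * s) u.
Proof. by rewrite -(coker_pi_val u) !coker_scaleE scalerA. Qed.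

Lemma coker_scale1 : left_id 1 coker_scale.
Proof. by move=> u; rewrite -(coker_pi_val u) coker_scaleE scale1r. Qed.

Lemma coker_scaleDr : right_distributive coker_scale +%R.
Proof.
move=> r u v; rewrite -(coker_pi_val u) -(coker_pi_val v); move: (val u) (val v) => x y.
change (coker_scale r (coker_add (coker_pi x) (coker_pi y))
  = coker_add (coker_scale r (coker_pi x)) (coker_scale r (coker_pi y))).
by rewrite coker_addE !coker_scaleE coker_addE scalerDr.
Qed.

Lemma coker_scaleDl u : {morph coker_scale^~ u : r s / r + s}.
Proof.
move=> r s; rewrite -(coker_pi_val u); move: (val u) => x.
change (coker_scale (r + s) (coker_pi x)
  = coker_add (coker_scale r (coker_pi x)) (coker_scale s (coker_pi x))).
by rewrite !coker_scaleE coker_addE scalerDl.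
Qed.

HB.instance Definition _ := GRing.Zmodule_isLmodule.Build R coker
  coker_scaleA coker_scale1 coker_scaleDr coker_scaleDl.

Lemma coker_pi_is_linear : linear coker_pi.
Proof.
move=> r x y.
by change (coker_pi (r *: x + y) = coker_add (coker_scale r (coker_pi x)) (coker_pi y));
  rewrite coker_scaleE coker_addE.
Qed.

HB.instance Definition _ :=
  GRing.isLinear.Build R _ coker _ coker_pi coker_pi_is_linear.

Lemma coker_pi_eq0 x : coker_pi x = 0 <-> rowspan N x.
Proof. by rewrite -[0 : coker]/(coker_pi 0) coker_piP subr0. Qed.

Lemma coker_finitely_presented : finitely_presented coker.
Proof.
pose k i := if i is 0 then n else m.
pose A i : 'M[R]_(k i.+1, k i) := if i is 0 then N else 0.
exists k, A, coker_pi; split; first exact: coker_pi_surj.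
by split=> // _ v; apply: coker_pi_eq0.
Qed.

End Cokernel.

Section SelfFpInjective.
Variables (R : comPzRingType) (a b : nat) (P : 'M[R]_(a, b)) (g : 'cV[R]_a).

(* [coker K] is the pushout of [R <- R^a -> R^b] along [g] and [P]: it is the
   extension of [coker P] by [R] whose splitting solves [P *m c = g]. *)
Local Notation K := (row_mx g (- P)).

Definition ext_incl (r : R^o) : coker K := coker_pi K (row_mx r%:M 0).
Definition ext_coord (z : 'rV[R]_b) : coker K := coker_pi K (row_mx 0 z).
Definition ext_proj (u : coker K) : coker P := coker_pi P (rsubmx (val u)).

Lemma ext_incl_is_linear : linear ext_incl.
Proof.
move=> r x y; rewrite /ext_incl -linearP scale_row_mx add_row_mx scaler0 addr0.
by rewrite scale_scalar_mx -raddfD.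
Qed.
HB.instance Definition _ :=
  GRing.isLinear.Build R R^o (coker K) _ ext_incl ext_incl_is_linear.

Lemma ext_coord_is_linear : linear ext_coord.
Proof.
move=> r x y; rewrite /ext_coord -linearP scale_row_mx add_row_mx.
by rewrite scaler0 addr0.
Qed.
HB.instance Definition _ :=
  GRing.isLinear.Build R 'rV[R]_b (coker K) _ ext_coord ext_coord_is_linear.

Lemma ext_proj_pi w : ext_proj (coker_pi K w) = coker_pi P (rsubmx w).
Proof.
apply/coker_piP; rewrite -linearB /=; have [z ->] := rowspan_val_pi K w.
by exists (- z); rewrite mul_mx_row row_mxKr mulmxN mulNmx.
Qed.

Lemma ext_proj_is_linear : linear ext_proj.
Proof.
move=> r u v; rewrite -[u]coker_pi_val -[v]coker_pi_val -linearP.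
by rewrite !ext_proj_pi !linearP.
Qed.
HB.instance Definition _ :=
  GRing.isLinear.Build R (coker K) (coker P) _ ext_proj ext_proj_is_linear.

Lemma ext_proj_coord z : ext_proj (ext_coord z) = coker_pi P z.
Proof. by rewrite ext_proj_pi row_mxKr. Qed.

Lemma ext_coord_rows v : ext_coord (v *m P) = ext_incl ((v *m g) 0 0).
Proof.
apply/coker_piP; exists (- v).
by rewrite -mx11_scalar opp_row_mx add_row_mx mul_mx_row sub0r subr0 !mulNmx mulmxN opprK.
Qed.

Lemma ext_proj_surj f : exists u, ext_proj u = f.
Proof.
by have [z <-] := coker_pi_surj f; exists (ext_coord z); apply: ext_proj_coord.
Qed.

Lemma ext_proj_eq0 u : ext_proj u = 0 <-> exists r, u = ext_incl r.
Proof.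
split=> [|[r ->]]; last by rewrite ext_proj_pi row_mxKr linear0.
have [w <-] := coker_pi_surj u; rewrite ext_proj_pi coker_pi_eq0 => -[z ez].
exists ((lsubmx w + z *m g) 0 0); apply/coker_piP; exists (- z).
rewrite -{1}[w]hsubmxK ez -mx11_scalar opp_row_mx add_row_mx mul_mx_row.
by rewrite subr0 opprD addNKr !mulNmx mulmxN opprK.
Qed.

Lemma ext_incl_inj :
  (forall v : 'rV_a, v *m P = 0 -> v *m g = 0) -> injective ext_incl.
Proof.
move=> hg r r' /coker_piP [z]; rewrite opp_row_mx add_row_mx subr0 mul_mx_row.
move=> /eq_row_mx [er /esym ez]; apply/eqP; rewrite -subr_eq0.
have /hg : z *m P = 0 by apply/oppr_inj; rewrite -mulmxN ez oppr0.
by rewrite -er -raddfB => /matrixP /(_ 0 0) /=; rewrite !mxE mulr1n => ->.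
Qed.

Lemma self_fp_injective_solvable : self_fp_injective R ->
  (forall v : 'rV_a, v *m P = 0 -> v *m g = 0) -> exists c : 'cV_b, g = P *m c.
Proof.
move=> fpiR hg; have inj := ext_incl_inj hg.
have [s hs] := fpiR _ (coker_finitely_presented P) _ _ _ inj ext_proj_surj ext_proj_eq0.
have [c hc] : exists c : 'cV_b, forall j,
    ext_coord (delta_mx 0 j) = s (coker_pi P (delta_mx 0 j)) - ext_incl (c j 0).
  have ker_j j : ext_proj (s (coker_pi P (delta_mx 0 j)) - ext_coord (delta_mx 0 j)) = 0.
    by rewrite linearB /= hs ext_proj_coord subrr.
  have [c hc] := fin_all_exists (fun j => proj1 (ext_proj_eq0 _) (ker_j j)).
  by exists (\col_j c j) => j; rewrite mxE -hc opprB addrC subrK.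
have coordE z : ext_coord z = s (coker_pi P z) - ext_incl ((z *m c) 0 0).
  rewrite (row_sum_delta z) !linear_sum.
  rewrite mulmx_suml summxE linear_sum -sumrB; apply: eq_bigr => j _.
  rewrite !linearZ /= hc scalerBr -scalemxAl mxE -rowE mxE.
  by congr (_ - _); rewrite -linearZ.
exists (- c); rewrite mulmxN; apply/colP => i; rewrite [RHS]mxE; apply: inj.
have entry (A : 'cV[R]_a) : ((delta_mx 0 i : 'rV_a) *m A) 0 0 = A i 0.
  by rewrite -rowE mxE.
have := coordE (delta_mx 0 i *m P).
rewrite ext_coord_rows (proj2 (coker_pi_eq0 _ _)); last by exists (delta_mx 0 i).
by rewrite linear0 sub0r -mulmxA !entry linearN.
Qed.

End SelfFpInjective.

Definition lker (R : comPzRingType) p w (Q : 'M[R]_(p, w)) (v : 'rV[R]_p) :=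
  v *m Q = 0.

Definition fg_up_to (R : comPzRingType) (x : R) n (P : 'rV[R]_n -> Prop) :=
  exists h (C : 'M[R]_(h, n)),
    (forall z, P (z *m C)) /\ forall v, P v -> rowspan C (x *: v).

Lemma lker_block (R : comPzRingType) p1 p2 w1 w2
    (A : 'M[R]_(p1, w1)) (B : 'M[R]_(p2, w2)) v :
  lker (block_mx A 0 0 B) v <-> lker A (lsubmx v) /\ lker B (rsubmx v).
Proof.
rewrite /lker -{1}(hsubmxK v) mul_row_block !mulmx0 addr0 add0r.
split=> [/eqP|[-> ->]]; last exact: row_mx0.
by rewrite row_mx_eq0 => /andP[/eqP -> /eqP ->].
Qed.

Section LocalDuality.
Variables (R : comPzRingType) (S : R -> Prop).
Hypotheses (S1 : S 1) (SM : forall x y, S x -> S y -> S (x * y)).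

(* The localisation S^-1 R is never built: [fg_at], [unit_at] and [dvd_at]
   express finite generation, invertibility and divisibility over it after
   clearing denominators. *)
Definition fg_at n (P : 'rV[R]_n -> Prop) := exists2 x, S x & fg_up_to x P.

Definition unit_at n (U : 'M[R]_n) :=
  exists U' c, [/\ S c, U' *m U = c%:M & U *m U' = c%:M].

Definition lker_duality p w (Q : 'M[R]_(p, w)) :=
  fg_at (lker Q^T) -> fg_at (lker Q).

Lemma fg_at_full n (P : 'rV[R]_n -> Prop) : (forall v, P v) -> fg_at P.
Proof.
move=> hP; exists 1 => //; exists n, 1%:M; split=> // v _.
by exists v; rewrite scale1r mulmx1.
Qed.

Lemma fg_at_transport n n' (P : 'rV[R]_n -> Prop) (T : 'rV[R]_n' -> Prop)
    (F : 'M[R]_(n, n')) (G : 'M[R]_(n', n)) c :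
  S c -> G *m F = c%:M -> (forall v, P v -> T (v *m F)) ->
  (forall w, T w -> P (w *m G)) -> fg_at P -> fg_at T.
Proof.
move=> Sc GF PT TP [x Sx [h [C [CP hC]]]].
exists (x * c); first exact: SM.
exists h, (C *m F); split=> [z|w /TP /hC [z ez]]; first by rewrite mulmxA; apply/PT/CP.
by exists z; rewrite mulmxA -ez -scalemxAl -mulmxA GF mul_mx_scalar scalerA.
Qed.

Lemma fg_at_lker_scale p w (Q : 'M[R]_(p, w)) c :
  S c -> fg_at (lker (c *: Q)) -> fg_at (lker Q).
Proof.
move=> Sc; apply: (fg_at_transport (F := c%:M) (G := 1%:M) (c := c)) => //.
- exact: mul1mx.
- by move=> v; rewrite /lker mul_mx_scalar -scalemxAl scalemxAr.
- by move=> v; rewrite /lker mulmx1 -scalemxAr => ->; rewrite scaler0.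
Qed.

Lemma fg_at_lker_mul p w (U : 'M[R]_p) (Q : 'M[R]_(p, w)) (V : 'M[R]_w) :
  unit_at U -> unit_at V -> fg_at (lker Q) -> fg_at (lker (U *m Q *m V)).
Proof.
move=> [U' [cU [ScU eU' eU]]] [V' [cV [ScV _ eV]]].
apply: (fg_at_transport (F := U') (G := cV *: U) (c := cV * cU)) => [||v|v].
- exact: SM.
- by rewrite -scalemxAl eU scale_scalar_mx.
- rewrite /lker !mulmxA -(mulmxA v) eU' mul_mx_scalar => hv.
  by rewrite -!scalemxAl hv mul0mx scaler0.
- rewrite /lker -scalemxAr -scalemxAl -mul_mx_scalar -eV !mulmxA => ->.
  exact: mul0mx.
Qed.

Lemma unit_at_tr n (U : 'M[R]_n) : unit_at U -> unit_at U^T.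
Proof.
move=> [U' [c [Sc eU' eU]]]; exists U'^T, c.
by rewrite -!trmx_mul eU' eU tr_scalar_mx.
Qed.

Lemma unit_at_tperm n (i j : 'I_n) : unit_at (tperm_mx i j).
Proof.
have e : tperm_mx i j *m tperm_mx i j = 1%:M :> 'M[R]_n.
  by rewrite -perm_mxM tperm2 perm_mx1.
by exists (tperm_mx i j), 1.
Qed.

Lemma unit_at_lower p (col : 'cV[R]_p) s : S s -> unit_at (block_mx 1%:M 0 col s%:M).
Proof.
move=> Ss; exists (block_mx s%:M 0 (- col) 1%:M), s.
rewrite !mulmx_block !mulmx0 !mul0mx !mulmx1 !mul1mx !addr0 !add0r.
by rewrite mul_mx_scalar mul_scalar_mx scalerN addNr subrr -scalar_mx_block.
Qed.

Lemma lker_duality_equiv p w (U : 'M[R]_p) (Q : 'M[R]_(p, w)) (V : 'M[R]_w) :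
  unit_at U -> unit_at V -> lker_duality (U *m Q *m V) -> lker_duality Q.
Proof.
move=> hU hV dual hQ.
have := fg_at_lker_mul (unit_at_tr hV) (unit_at_tr hU) hQ.
rewrite -mulmxA -!trmx_mul => /dual.
have [[U' [cU [ScU eU' eU]]] [V' [cV [ScV eV' eV]]]] := (hU, hV).
have hU' : unit_at U' by exists U, cU.
have hV' : unit_at V' by exists V, cV.
move/(fg_at_lker_mul hU' hV'); rewrite -!mulmxA eV mulmxA eU'.
by rewrite mul_mx_scalar mul_scalar_mx scalerA; apply: fg_at_lker_scale; apply: SM.
Qed.

Lemma fg_at_lker_block p1 p2 w1 w2 (A : 'M[R]_(p1, w1)) (B : 'M[R]_(p2, w2)) :
  fg_at (lker (block_mx A 0 0 B)) <-> fg_at (lker A) /\ fg_at (lker B).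
Proof.
split=> [hAB|[[x1 Sx1 [h1 [C1 [hC1 gC1]]]] [x2 Sx2 [h2 [C2 [hC2 gC2]]]]]].
  split.
  - apply: (fg_at_transport (F := col_mx 1%:M 0) (G := row_mx 1%:M 0) (c := 1)) hAB => //.
    + by rewrite mul_row_col mul0mx addr0 mulmx1.
    + move=> v /lker_block[hA _].
      by rewrite -(hsubmxK v) mul_row_col mulmx0 addr0 mulmx1.
    + move=> v hv; apply/lker_block.
      by rewrite mul_mx_row mulmx1 mulmx0 row_mxKl row_mxKr; split=> //; exact: mul0mx.
  - apply: (fg_at_transport (F := col_mx 0 1%:M) (G := row_mx 0 1%:M) (c := 1)) hAB => //.
    + by rewrite mul_row_col mul0mx add0r mulmx1.
    + move=> v /lker_block[_ hB].
      by rewrite -(hsubmxK v) mul_row_col mulmx0 add0r mulmx1.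
    + move=> v hv; apply/lker_block.
      by rewrite mul_mx_row mulmx1 mulmx0 row_mxKl row_mxKr; split=> //; exact: mul0mx.
exists (x1 * x2); first exact: SM.
exists (h1 + h2)%N, (block_mx C1 0 0 C2); split=> [z|v /lker_block[/gC1[z1 e1] /gC2[z2 e2]]].
  apply/lker_block; rewrite -(hsubmxK z) mul_row_block !mulmx0 addr0 add0r.
  by rewrite row_mxKl row_mxKr.
exists (row_mx (x2 *: z1) (x1 *: z2)).
rewrite mul_row_block !mulmx0 addr0 add0r -!scalemxAl -e1 -e2 !scalerA mulrC.
by rewrite -scale_row_mx hsubmxK.
Qed.

Lemma lker_duality_block p1 p2 w1 w2 (A : 'M[R]_(p1, w1)) (B : 'M[R]_(p2, w2)) :
  lker_duality A -> lker_duality B -> lker_duality (block_mx A 0 0 B).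
Proof.
rewrite /lker_duality tr_block_mx !trmx0 !fg_at_lker_block.
by move=> dA dB [/dA hA /dB hB].
Qed.

Lemma lker_duality_scalar (a : R) : lker_duality (a%:M : 'M_1).
Proof. by rewrite /lker_duality tr_scalar_mx. Qed.

Definition dvd_at (a b : R) := exists s c, S s /\ s * b = c * a.

Hypothesis dvd_at_total : forall a b, dvd_at a b \/ dvd_at b a.

Lemma seq_pivot (I : eqType) (f : I -> R) (i : I) (l : seq I) :
  exists2 k, k \in i :: l & exists2 s, S s &
    forall j, j \in i :: l -> exists c, s * f j = c * f k.
Proof.
elim: l i => [|i' l IH] i.
  exists i; first exact: mem_head.
  by exists 1 => // j; rewrite mem_seq1 => /eqP ->; exists 1.
have [k kl [s Ss hs]] := IH i'.
have [[t [d [St e]]]|[t [d [St e]]]] := dvd_at_total (f i) (f k).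
- exists i; first exact: mem_head.
  exists (s * t) => [|j]; first exact: SM.
  rewrite in_cons => /predU1P[->|/hs[c ec]]; first by exists (s * t).
  by exists (c * d); rewrite mulrAC ec mulrAC -mulrA e mulrA.
- exists k; first by rewrite in_cons kl orbT.
  exists (s * t) => [|j]; first exact: SM.
  rewrite in_cons => /predU1P[->|/hs[c ec]]; first by exists (s * d); rewrite -mulrA e mulrA.
  by exists (c * t); rewrite mulrAC ec mulrAC.
Qed.

Lemma mx_pivot m n (Q : 'M[R]_(m.+1, n.+1)) :
  exists i0 j0 s, S s /\ forall i j, exists c, s * Q i j = c * Q i0 j0.
Proof.
have [[i0 j0] _ [s Ss hs]] :=
  seq_pivot (fun ij => Q ij.1 ij.2) (0, 0) (enum {: 'I_m.+1 * 'I_n.+1}).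
exists i0, j0, s; split=> // i j; apply: (hs (i, j)).
by rewrite in_cons mem_enum orbT.
Qed.

Lemma pivot_clear p w (Q : 'M[R]_(1 + p, 1 + w)) s : S s ->
    (forall i j, exists c, s * Q i j = c * ulsubmx Q 0 0) ->
  exists L Rm (Q3 : 'M_(p, w)),
    [/\ unit_at L, unit_at Rm & L *m Q *m Rm = block_mx (ulsubmx Q) 0 0 Q3].
Proof.
move=> Ss hQ; set a := ulsubmx Q 0 0 in hQ.
have [cr hcr] := fin_all_exists (fun j => hQ (lshift p 0) (rshift 1 j)).
have [cc hcc] := fin_all_exists (fun i => hQ (rshift 1 i) (lshift w 0)).
pose row : 'rV_w := \row_j cr j; pose col : 'cV_p := \col_i cc i.
have ea : ulsubmx Q = a%:M by apply: mx11_scalar.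
have E1 : - col *m ulsubmx Q + s%:M *m dlsubmx Q = 0.
  rewrite ea mul_mx_scalar mul_scalar_mx; apply/matrixP => i j.
  by rewrite (ord1 j) !mxE hcc mulrN addrC mulrC subrr.
have E2 : ulsubmx Q *m - row + ursubmx Q *m s%:M = 0.
  rewrite ea mul_mx_scalar mul_scalar_mx; apply/matrixP => i j.
  by rewrite (ord1 i) !mxE hcr mulrN addrC mulrC subrr.
exists (block_mx 1%:M 0 (- col) s%:M), (block_mx 1%:M (- row) 0 s%:M).
exists ((- col *m ursubmx Q + s%:M *m drsubmx Q) *m s%:M); split.
- exact: unit_at_lower.
- have := unit_at_tr (unit_at_lower (- row^T) Ss).
  by rewrite tr_block_mx !trmx0 !tr_scalar_mx linearN /= trmxK.
- rewrite -{1}(submxK Q) !mulmx_block !mul1mx !mul0mx !addr0 E1.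
  by rewrite !mulmx0 !mul0mx !mulmx1 !addr0 !add0r E2.
Qed.

Lemma lker_duality_all p w (Q : 'M[R]_(p, w)) : lker_duality Q.
Proof.
elim: p w Q => [|p IH] w Q.
  by move=> _; apply: fg_at_full => v; rewrite /lker (thinmx0 v) mul0mx.
case: w Q => [|w] Q; first by move=> _; apply: fg_at_full => v; apply: thinmx0.
have [i0 [j0 [s [Ss hs]]]] := mx_pivot Q.
apply: (lker_duality_equiv (unit_at_tperm 0 i0) (unit_at_tperm 0 j0)).
rewrite -xrowE -xcolE; set Q1 : 'M_(1 + p, 1 + w) := xcol _ _ _.
have hQ1 i j : exists c, s * Q1 i j = c * ulsubmx Q1 0 0.
  have e0 k : lshift k (0 : 'I_1) = 0 by apply/val_inj.
  by rewrite !mxE !e0 !tpermL.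
have [L [Rm [Q3 [hL hRm eQ1]]]] := pivot_clear Ss hQ1.
apply: (lker_duality_equiv hL hRm); rewrite eQ1.
apply: lker_duality_block; last exact: IH.
by rewrite [ulsubmx _]mx11_scalar; apply: lker_duality_scalar.
Qed.

End LocalDuality.

Section MaximalIdeals.
Variable R : comPzRingType.

Definition proper_ideal (I : R -> Prop) := is_ideal I /\ ~ I 1.

Lemma proper_ideal_chain_union (J : R -> Prop) (F : set (set R)) :
    proper_ideal J -> (forall X, F X -> proper_ideal (X `|` J)) ->
    total_on F subset -> proper_ideal ((\bigcup_(X in F) X) `|` J).
Proof.
move=> pJ pF chainF; set U := _ `|` J.
have cover x y : U x -> U y ->
    exists2 X, proper_ideal X & [/\ X `<=` U, X x & X y].
  have sub X : F X -> X `|` J `<=` U by move=> FX z [Xz|Jz]; [left; exists X|right].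
  case=> [[X FX Xx]|Jx] [[Y FY Yy]|Jy].
  - have [XY|YX] := chainF X Y FX FY.
    + by exists (Y `|` J); [exact: pF|split; [exact: sub|left; apply: XY|left]].
    + by exists (X `|` J); [exact: pF|split; [exact: sub|left|left; apply: YX]].
  - by exists (X `|` J); [exact: pF|split; [exact: sub|left|right]].
  - by exists (Y `|` J); [exact: pF|split; [exact: sub|right|left]].
  - by exists J => //; split=> // z Jz; right.
split=> [|U1]; last by have [X [_ nX1] [_ X1 _]] := cover 1 1 U1 U1.
split; first by right; case: pJ => -[].
split=> [x y Ux Uy|r x Ux].
  have [X [[_ [XD _]] _] [XU Xx Xy]] := cover x y Ux Uy; exact/XU/XD.
have [X [[_ [_ XM]] _] [XU Xx _]] := cover x x Ux Ux; exact/XU/XM.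
Qed.

Lemma exists_maximal_ideal (J : R -> Prop) : proper_ideal J ->
  exists2 M, is_maximal_ideal M & forall x, J x -> M x.
Proof.
(* Zorn's lemma is applied to the sets X such that X `|` J is a proper ideal,
   a family that contains [set0], the union of the empty chain. *)
move=> pJ; have [A [PA Amax]] : exists A, proper_ideal (A `|` J) /\
    forall B, A `<` B -> ~ proper_ideal (B `|` J).
  by apply: Zorn_bigcup => F FP; apply: proper_ideal_chain_union.
exists (A `|` J) => [|x Jx]; last by right.
split; [exact: PA.1|split; [exact: PA.2|]].
move=> I idI AJI; have [I1|nI1] := pselect (I 1); [by right|left] => x.
split=> [Ix|]; last exact: AJI.
apply: contrapT => nAJx; apply: (Amax I).
  by split=> [y Ay|IA]; [apply: AJI; left|apply/nAJx; left; apply: IA].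
rewrite setUidl; first by split.
by move=> y Jy; apply: AJI; right.
Qed.

Lemma maximal_ideal_compl_mul (M : R -> Prop) : is_maximal_ideal M ->
  forall a b, ~ M a -> ~ M b -> ~ M (a * b).
Proof.
move=> [[M0 [MD MM]] [nM1 Mmax]] a b Ma Mb Mab.
pose J x := exists m r, M m /\ x = m + r * a.
have idJ : is_ideal J.
  split; first by exists 0, 0; rewrite mul0r addr0.
  split=> [x y [m [r [Mm ->]]] [m' [r' [Mm' ->]]]|s x [m [r [Mm ->]]]].
    by exists (m + m'), (r + r'); rewrite mulrDl addrACA; split=> //; apply: MD.
  by exists (s * m), (s * r); rewrite mulrDr mulrA; split=> //; apply: MM.
have MJ x : M x -> J x by exists x, 0; rewrite mul0r addr0.
have [/(_ a) JM|[m [r [Mm e1]]]] := Mmax J idJ MJ.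
  by apply/Ma/JM; exists 0, 1; rewrite mul1r add0r.
apply: Mb; rewrite -[b]mulr1 e1 mulrDr mulrCA [b * a]mulrC.
by apply: MD; apply: MM.
Qed.

End MaximalIdeals.

Definition lker_fg (R : comPzRingType) p w (Q : 'M[R]_(p, w)) :=
  exists h (C : 'M[R]_(h, p)), forall v, lker Q v <-> rowspan C v.

Lemma fg_up_to_ideal (R : comPzRingType) n (P : 'rV[R]_n -> Prop) :
  P 0 -> (forall u v, P u -> P v -> P (u + v)) -> is_ideal (fun x => fg_up_to x P).
Proof.
move=> P0 PD; split.
  exists 0, 0; split=> [z|v _]; first by rewrite mulmx0.
  by exists 0; rewrite scale0r mul0mx.
split=> [x y [h1 [C1 [PC1 gC1]]] [h2 [C2 [PC2 gC2]]]|r x [h [C [PC gC]]]].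
  exists (h1 + h2)%N, (col_mx C1 C2); split=> [z|v /[dup] /gC1[z1 e1] /gC2[z2 e2]].
    by rewrite -[z]hsubmxK mul_row_col; apply: PD.
  by exists (row_mx z1 z2); rewrite mul_row_col -e1 -e2 scalerDl.
exists h, C; split=> // v /gC[z ez].
by exists (r *: z); rewrite -scalemxAl -ez scalerA.
Qed.

Section Arithmetic.
Variables (R : comPzRingType) (arR : arithmetic R).

Lemma arithmetic_lker_fg p w (Q : 'M[R]_(p, w)) : lker_fg Q^T -> lker_fg Q.
Proof.
move=> [h [G hG]].
have idl : is_ideal (fun x => fg_up_to x (lker Q)).
  by apply: fg_up_to_ideal => [|u v]; rewrite /lker ?mul0mx // mulmxDl => -> ->; rewrite addr0.
have [[h' [C [CQ gC]]]|n1] := pselect (fg_up_to 1 (lker Q)).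
  by exists h', C => v; split=> [/gC|[z ->]]; rewrite ?scale1r.
have [M maxM JM] := exists_maximal_ideal (conj idl n1).
have M1 : ~ M 1 by case: maxM => _ [].
have hQT : fg_at (fun x => ~ M x) (lker Q^T).
  by exists 1 => //; exists h, G; split=> [z|v /hG]; [apply/hG; exists z|rewrite scale1r].
have [x nMx fgx] := lker_duality_all M1 (maximal_ideal_compl_mul maxM) (arR maxM) hQT.
by case: nMx; apply: JM.
Qed.

Lemma lker_fg_of_exact (fpiR : self_fp_injective R) k0 k1 k2
    (A0 : 'M[R]_(k1, k0)) (A1 : 'M[R]_(k2, k1)) :
  (forall v, lker A0 v <-> rowspan A1 v) -> lker_fg A1.
Proof.
move=> exA; have A1A0 : A1 *m A0 = 0.
  apply/row_matrixP => i; rewrite row_mul row0; apply/exA.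
  by exists (delta_mx 0 i); rewrite rowE.
apply: arithmetic_lker_fg; exists k0, A0^T => v; split=> [vA1|[z ->]]; last first.
  by rewrite /lker -mulmxA -trmx_mul A1A0 trmx0 mulmx0.
have A1v : A1 *m v^T = 0 by rewrite -[A1]trmxK -trmx_mul vA1 trmx0.
have [c ec] : exists c, v^T = A0 *m c.
  by apply: self_fp_injective_solvable => // u /exA[z ->]; rewrite -mulmxA A1v mulmx0.
by exists c^T; rewrite -trmx_mul -ec trmxK.
Qed.

End Arithmetic.

Lemma lker_gen_ex (R : comPzRingType) p w (Q : 'M[R]_(p, w)) :
  exists C : {h & 'M[R]_(h, p)},
    lker_fg Q -> forall v, lker Q v <-> rowspan (projT2 C) v.
Proof.
have [[h [C hC]]|nfg] := pselect (lker_fg Q); first by exists (existT _ h C).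
by exists (existT _ 0%N (0 : 'M[R]_(0, p))) => /nfg.
Qed.

Definition lker_gen (R : comPzRingType) p w (Q : 'M[R]_(p, w)) :=
  projT2 (proj1_sig (cid (lker_gen_ex Q))).

Lemma lker_genP (R : comPzRingType) p w (Q : 'M[R]_(p, w)) :
  lker_fg Q -> forall v, lker Q v <-> rowspan (lker_gen Q) v.
Proof. exact: proj2_sig (cid (lker_gen_ex Q)). Qed.

Record free_map (R : comPzRingType) :=
  FreeMap { fm_src : nat; fm_tgt : nat; fm_mx : 'M[R]_(fm_src, fm_tgt) }.

Definition syzygy (R : comPzRingType) (A : free_map R) := FreeMap (lker_gen (fm_mx A)).

Theorem theorem2p4 (R : comPzRingType) :
  arithmetic R -> self_fp_injective R -> lambda_dim_le R 2.
Proof.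
move=> arR fpiR E [k [A [p [p_surj [ker_p exact_k]]]]] n.
pose F i := iter i (@syzygy R) (FreeMap (A 0%N)).
have fgF i : lker_fg (fm_mx (F i)).
  elim: i => [|i IH]; first by exists (k 2%N), (A 1%N); apply: exact_k.
  exact: (lker_fg_of_exact arR fpiR (lker_genP IH)).
exists (fun i => fm_tgt (F i)), (fun i => fm_mx (F i)), p.
split=> //; split=> [_|i _]; first exact: ker_p.
exact: lker_genP (fgF i).
Qed.
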